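(* Let $\mathbb{F}$ be a field of characteristic $2$, $V$ a finite-dimensional $\mathbb{F}$-vector space and $b$ a non-degenerate symmetric bilinear form on $V$. Let $x$ be a non-zero vector of $V$ with $b(x,x)=0$, and let $u$ be a $b$-symmetric endomorphism of $V$. The following are equivalent: (i) $u(x)=0$ and $u(\{x\}^\perp) \subset \mathbb{F}x$; (ii) there exist $y \in \{x\}^\perp$ and $\alpha \in \mathbb{F}$ such that $u = \alpha\, x\otimes_b x + x\wedge_b y$. Moreover, if these conditions hold then $u$ is nilpotent and $u^3=0$.
   Context: An endomorphism $u$ of $V$ is $b$-symmetric if $(x,y)\mapsto b(x,u(y))$ is symmetric. $\{x\}^\perp = \{z\in V : b(x,z)=0\}$. For $x,y\in V$, $x\otimes_b x$ is the endomorphism $z\mapsto b(x,z)\,x$, and $x \wedge_b y$ is the endomorphism $z \mapsto b(y,z)\,x - b(x,z)\,y$. *)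

From HB Require Import structures.
From mathcomp Require Import all_boot all_order all_algebra all_field.
Set Implicit Arguments. Unset Strict Implicit. Unset Printing Implicit Defensive.
Import GRing.Theory.
Local Open Scope ring_scope.

Definition b_symmetric (F : fieldType) (V : vectType F)
  (b : {symmetric V}) (u : 'End(V)) : Prop :=
  forall x y : V, b x (u y) = b y (u x).

Definition btensor (F : fieldType) (V : vectType F)
  (b : {symmetric V}) (x : V) : 'End(V) :=
  linfun (fun z : V => b x z *: x).

Definition bwedge (F : fieldType) (V : vectType F)
  (b : {symmetric V}) (x y : V) : 'End(V) :=
  linfun (fun z : V => b y z *: x - b x z *: y).

Definition lfun_pow (F : fieldType) (V : vectType F) (u : 'End(V)) (n : nat)
  : 'End(V) := iter n (fun f => (u \o f)%VF) \1%VF.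

Definition lfun_nilpotent (F : fieldType) (V : vectType F) (u : 'End(V)) : Prop :=
  exists n : nat, lfun_pow u n = 0.

From HB Require Import structures.
From mathcomp Require Import all_boot all_order all_algebra all_field.
Set Implicit Arguments. Unset Strict Implicit. Unset Printing Implicit Defensive.
Import GRing.Theory.
Local Open Scope ring_scope.

(* A b-symmetric u with u x = 0 maps V into x^⊥, as b(x, u z) = b(z, u x) = 0;
   if moreover u(x^⊥) ⊆ Fx, then u^3 = 0.  Non-degeneracy gives w with
   b(x, w) = 1, and splitting z = (z - b(x,z) w) + b(x,z) w shows
   u = x ⊗ u w + u w ⊗ x - b(w, u w) x ⊗ x in any characteristic.  In
   characteristic 2 the symmetric part x ⊗ y + y ⊗ x is the wedge x ∧ y. *)

Section SymmetricForm.
Variables (F : fieldType) (V : vectType F) (b : {symmetric V}).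

Lemma symmetric_formC (u v : V) : b u v = b v u.
Proof. by rewrite hermC /= expr0 mul1r. Qed.

Definition btensor_fun (x z : V) : V := b x z *: x.

Fact btensor_fun_is_linear x : linear (btensor_fun x).
Proof. by move=> a u v; rewrite /btensor_fun linearD linearZ /= scalerDl scalerA. Qed.

HB.instance Definition _ x :=
  GRing.isLinear.Build F V V *:%R (btensor_fun x) (btensor_fun_is_linear x).

Lemma btensorE x z : btensor b x z = b x z *: x.
Proof. exact: (lfunE (btensor_fun x)). Qed.

Definition bwedge_fun (x y z : V) : V := b y z *: x - b x z *: y.

Fact bwedge_fun_is_linear x y : linear (bwedge_fun x y).
Proof.
move=> a u v; rewrite /bwedge_fun !linearD !linearZ /= !scalerDl !scalerA.
by rewrite ![_ * a]mulrC addrACA.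
Qed.

HB.instance Definition _ x y :=
  GRing.isLinear.Build F V V *:%R (bwedge_fun x y) (bwedge_fun_is_linear x y).

Lemma bwedgeE x y z : bwedge b x y z = b y z *: x - b x z *: y.
Proof. exact: (lfunE (bwedge_fun x y)). Qed.

Lemma bwedgeE_pchar2 x y z : 2 \in [pchar F] ->
  bwedge b x y z = b y z *: x + b x z *: y.
Proof. by move=> ch2; rewrite bwedgeE -scaleNr oppr_pchar2. Qed.

Lemma nondegenerate_exists_form_eq1 x : nondegenerate b -> x != 0 ->
  exists w, b x w = 1.
Proof.
move=> /eqP radb0 x_neq0.
have /mem_orthovPn[v _ bxv_neq0] : x \notin orthov b fullv.
  by rewrite radb0 memv0.
by exists ((b x v)^-1 *: v); rewrite linearZ /= mulVf.
Qed.

Lemma btensor_bwedge_orthov_line x y alpha :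
  b x x = 0 -> y \in orthov b <[x]>%VS ->
  let u := alpha *: btensor b x + bwedge b x y in
  u x = 0 /\ {in orthov b <[x]>%VS, forall z, u z \in <[x]>%VS}.
Proof.
move=> bxx0 /[!mem_orthov1] /eqP byx0 u.
split=> [|z /[!mem_orthov1] /eqP bzx0];
  rewrite add_lfunE scale_lfunE btensorE bwedgeE.
  by rewrite bxx0 byx0 !scale0r scaler0 subrr addr0.
rewrite symmetric_formC bzx0 !scale0r scaler0 add0r subr0.
by rewrite memvZ ?memv_line.
Qed.

Section SymmetricEndomorphism.
Variables (u : 'End(V)) (x : V).
Hypothesis u_sym : b_symmetric b u.
Hypothesis u_orthov : {in orthov b <[x]>%VS, forall z, u z \in <[x]>%VS}.

Lemma b_symmetric_decomposition w : b x w = 1 -> forall z,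
  u z = b (u w) z *: x + b x z *: u w - (b w (u w) * b x z) *: x.
Proof.
move=> bxw1 z.
pose z' := z - b x z *: w.
have bwx1 : b w x = 1 by rewrite symmetric_formC.
have z'_orthov : z' \in orthov b <[x]>%VS.
  by rewrite mem_orthov1 linearBl linearZl_LR /= bwx1 mulr1 symmetric_formC subrr.
have /vlineP[c uz'] := u_orthov z'_orthov.
have c_val : c = b z (u w) - b x z * b w (u w).
  have := u_sym w z'; rewrite uz' linearZ /= bwx1 mulr1 => ->.
  by rewrite linearBl linearZl_LR.
have -> : u z = u z' + b x z *: u w by rewrite linearB linearZ /= subrK.
by rewrite uz' c_val symmetric_formC scalerBl addrAC mulrC.
Qed.

Hypothesis ux0 : u x = 0.

Lemma b_symmetric_img_orthov z : u z \in orthov b <[x]>%VS.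
Proof. by rewrite mem_orthov1 symmetric_formC u_sym ux0 linear0. Qed.

Lemma b_symmetric_cube : (u \o u \o u)%VF = 0.
Proof.
apply/lfunP => z; rewrite !comp_lfunE zero_lfunE.
have /vlineP[c ->] := u_orthov (b_symmetric_img_orthov z).
by rewrite linearZ /= ux0 scaler0.
Qed.

End SymmetricEndomorphism.

End SymmetricForm.

Lemma lfun_nilpotent_cube (F : fieldType) (V : vectType F) (u : 'End(V)) :
  (u \o u \o u)%VF = 0 -> lfun_nilpotent u.
Proof.
move=> u3_eq0; exists 3%N; rewrite -u3_eq0; apply/lfunP => z.
by rewrite /lfun_pow /= !comp_lfunE id_lfunE.
Qed.

Theorem proposition4p5 (F : fieldType) (V : vectType F) (b : {symmetric V})
  (x : V) (u : 'End(V)) :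
  2 \in [pchar F] ->
  nondegenerate b ->
  x != 0 -> b x x = 0 ->
  b_symmetric b u ->
  ((u x = 0 /\ (forall z, z \in orthov b <[x]>%VS -> u z \in <[x]>%VS))
   <->
   (exists (y : V) (alpha : F), y \in orthov b <[x]>%VS /\
      u = alpha *: btensor b x + bwedge b x y))
  /\
  ((u x = 0 /\ (forall z, z \in orthov b <[x]>%VS -> u z \in <[x]>%VS)) ->
   lfun_nilpotent u /\ (u \o u \o u)%VF = 0).
Proof.
move=> ch2 nondeg x_neq0 bxx0 u_sym.
split; last first.
  case=> ux0 u_orthov; have u3_eq0 := b_symmetric_cube u_sym u_orthov ux0.
  by split; first exact: lfun_nilpotent_cube.
split=> [[ux0 u_orthov] | [y [alpha [y_orthov ->]]]]; last first.
  exact: btensor_bwedge_orthov_line.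
have [w bxw1] := nondegenerate_exists_form_eq1 nondeg x_neq0.
exists (u w), (- b w (u w)); split; first exact: b_symmetric_img_orthov.
apply/lfunP => z.
rewrite (b_symmetric_decomposition u_sym u_orthov bxw1) add_lfunE.
by rewrite scale_lfunE btensorE bwedgeE_pchar2 // scalerA mulNr scaleNr addrC.
Qed.
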